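(* Let $A(z)=|z|^2I_d-z\otimes z$ on $\mathbb{R}^d$ and let $u$ be a probability distribution on $\mathbb{R}^d$ with finite second moment which is not concentrated on a line. Set $2E=\int|x|^2\,\mathrm{d}u(x)$ and $V=\int x\,\mathrm{d}u(x)$. Then there exists $\varepsilon>0$ such that for all $x\in\mathbb{R}^d$, $$\varepsilon\le \|A*u(x)\|_2\le 2E+|x-V|^2,$$ and $\varepsilon$ can be taken to be $\varepsilon=\operatorname{tr}(\mathrm{cov}(u))-\|\mathrm{cov}(u)\|_2$. In particular these bounds hold for any continuous probability density $u$ with finite second moment.
   Context: $\|\cdot\|_2$ denotes the matrix 2-norm (spectral norm); $(A*u)(x)=\int A(x-y)\,\mathrm{d}u(y)$ entrywise; $\mathrm{cov}(u)$ is the covariance matrix of $u$. *)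

From HB Require Import structures.
From mathcomp Require Import all_boot all_order all_algebra.
From mathcomp Require Import all_classical all_reals all_analysis.
Set Implicit Arguments. Unset Strict Implicit. Unset Printing Implicit Defensive.
Import Order.TTheory GRing.Theory Num.Theory.
Import numFieldNormedType.Exports.
Local Open Scope classical_set_scope.
Local Open Scope ring_scope.

(* R^d as row vectors 'rV[R]_d, equipped with its Borel sigma-algebra
   (the sigma-algebra generated by the open sets of the product topology). *)
Definition Rd (R : realType) (d : nat) := g_sigma_algebraType (@open 'rV[R]_d).

Definition enorm (R : realType) (d : nat) (v : 'rV[R]_d) : R :=
  Num.sqrt (\sum_(i < d) v 0 i ^+ 2).

Definition spec_norm (R : realType) (d : nat) (M : 'M[R]_d) : R :=
  sup [set enorm (M *m v^T)^T | v in [set v : 'rV[R]_d | enorm v = 1]].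

Definition Amat (R : realType) (d : nat) (z : 'rV[R]_d) : 'M[R]_d :=
  (enorm z ^+ 2) *: 1%:M - z^T *m z.

Definition mconv (R : realType) (d : nat) (A : 'rV[R]_d -> 'M[R]_d)
  (u : probability (Rd R d) R) (x : 'rV[R]_d) : 'M[R]_d :=
  \matrix_(i, j) (\int[u]_y (A (x - (y : 'rV[R]_d)) i j)).

Definition mean (R : realType) (d : nat) (u : probability (Rd R d) R) : 'rV[R]_d :=
  \row_i (\int[u]_x ((x : 'rV[R]_d) 0 i)).

Definition cov (R : realType) (d : nat) (u : probability (Rd R d) R) : 'M[R]_d :=
  \matrix_(i, j) (\int[u]_x (((x : 'rV[R]_d) 0 i - mean u 0 i) * (x 0 j - mean u 0 j))).

Definition finite_second_moment (R : realType) (d : nat) (u : probability (Rd R d) R) :=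
  u.-integrable [set: Rd R d] (fun x => (enorm (x : 'rV[R]_d) ^+ 2)%:E).

Definition concentrated_on_line (R : realType) (d : nat) (u : probability (Rd R d) R) :=
  exists (a b : 'rV[R]_d), b != 0 /\
    u [set (a + t *: b : Rd R d) | t in [set: R]] = 1%E.

From HB Require Import structures.
From mathcomp Require Import all_boot all_order all_algebra.
From mathcomp Require Import all_classical all_reals all_analysis.
From mathcomp Require Import ring lra.
Set Implicit Arguments. Unset Strict Implicit. Unset Printing Implicit Defensive.
Import Order.TTheory GRing.Theory Num.Theory.
Import numFieldNormedType.Exports.
Local Open Scope classical_set_scope.
Local Open Scope ring_scope.

(* Write Z_i(y) = x_i - y_i.  Then A*u(x) = tr(G) I - G for the Gram matrix
   G_kl = \int Z_k Z_l du, which is positive semidefinite, has trace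
   |x - V|^2 + tr cov(u), and equals cov(u) at x = V.  For a positive
   semidefinite G and a unit vector v, |G v|^2 <= tr G <v, G v>, hence
   |(tr G - G) v| <= tr G; so ||A*u(x)|| <= tr G <= 2E + |x - V|^2, since
   2E = |V|^2 + tr cov(u).  Testing tr G - G on a unit v orthogonal to x - V
   (there is one: a measure on R is concentrated on a line, so d >= 2) gives
   <v, G v> = <v, cov(u) v> <= ||cov(u)||, hence
   ||A*u(x)|| >= tr G - ||cov(u)|| >= tr cov(u) - ||cov(u)||.
   Finally ||cov(u)|| is at most the Frobenius norm, and
   sum_kl cov_kl^2 <= sum_kl cov_kk cov_ll = (tr cov(u))^2 strictly, because
   some 2x2 principal minor of cov(u) is positive: otherwise all centred
   coordinates are a.e. proportional to a single one and u lies on a line. *)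

Lemma quadratic_form_ge0_sqr_le (R : realFieldType) (a b c : R) :
  (forall s t, 0 <= s ^+ 2 * a + 2 * s * t * b + t ^+ 2 * c) -> b ^+ 2 <= a * c.
Proof.
(* (s, t) = (c, -b) gives c (a c - b^2) >= 0, and (2 b, -(a + 1)) settles c = 0. *)
move=> H; have := H 1 0; have := H 0 1; have := H c (- b); have := H (2 * b) (- (a + 1)).
nra.
Qed.

Lemma ltr_sum_at (R : numDomainType) (I : finType) (F G : I -> R) i :
  (forall k, F k <= G k) -> F i < G i -> \sum_k F k < \sum_k G k.
Proof. by move=> FG FGi; rewrite (bigD1 i) //= [ltRHS](bigD1 i) //= ltr_leD // ler_sum. Qed.

Section BilinearForm.
Variables (R : realFieldType) (n : nat).
Implicit Types (G : 'M[R]_n) (a b v : 'rV[R]_n).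

Definition bform G a b : R := (a *m G *m b^T) 0 0.

Definition psdmx G := G^T = G /\ forall v, 0 <= bform G v v.

Lemma bformE G a b : bform G a b = \sum_k \sum_l a 0 k * G k l * b 0 l.
Proof.
rewrite /bform mxE exchange_big; apply: eq_bigr => l _.
by rewrite !mxE big_distrl.
Qed.

Lemma bformC G a b : G^T = G -> bform G a b = bform G b a.
Proof.
move=> sG; rewrite /bform.
have -> : (a *m G *m b^T) 0 0 = ((a *m G *m b^T)^T) 0 0 by rewrite [RHS]mxE.
by rewrite !trmx_mul trmxK sG mulmxA.
Qed.

Lemma bform_delta G k l : bform G (delta_mx 0 k) (delta_mx 0 l) = G k l.
Proof. by rewrite /bform -rowE trmx_delta -colE !mxE. Qed.

Lemma bform_scale_add G s t a b : G^T = G ->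
  bform G (s *: a + t *: b) (s *: a + t *: b) =
  s ^+ 2 * bform G a a + 2 * s * t * bform G a b + t ^+ 2 * bform G b b.
Proof.
move=> sG; have := bformC a b sG; rewrite /bform => ba.
rewrite linearD !linearZ /= !mulmxDl !mulmxDr -!scalemxAl -!scalemxAr.
move: ba; move: (a *m G *m a^T) (a *m G *m b^T) (b *m G *m a^T) (b *m G *m b^T).
by move=> aa ab ba bb e; rewrite !mxE e; ring.
Qed.

Lemma bformDr G a b c : bform G a (b + c) = bform G a b + bform G a c.
Proof. by rewrite /bform linearD /= mulmxDr mxE. Qed.

Lemma bformZr G a s b : bform G a (s *: b) = s * bform G a b.
Proof. by rewrite /bform linearZ /= -scalemxAr mxE. Qed.

Lemma bformNr G a b : bform G a (- b) = - bform G a b.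
Proof. by rewrite -scaleN1r bformZr mulN1r. Qed.

Lemma bform_delta_subZ G j i s : G^T = G ->
  bform G (delta_mx 0 j - s *: delta_mx 0 i) (delta_mx 0 j - s *: delta_mx 0 i) =
  G j j - 2 * s * G j i + s ^+ 2 * G i i.
Proof.
move=> sG; rewrite -scaleNr -[delta_mx 0 j]scale1r bform_scale_add // !bform_delta.
by rewrite expr1n mul1r mulr1 mulrN mulNr sqrrN.
Qed.

Lemma bform_cauchy_schwarz G a b : psdmx G ->
  bform G a b ^+ 2 <= bform G a a * bform G b b.
Proof.
by move=> [sG G0]; apply: quadratic_form_ge0_sqr_le => s t; rewrite -bform_scale_add.
Qed.

Lemma bform1E a b : bform 1%:M a b = \sum_k a 0 k * b 0 k.
Proof. by rewrite /bform mulmx1 mxE; apply: eq_bigr => k _; rewrite mxE. Qed.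

Lemma bform1_delta a k : bform 1%:M a (delta_mx 0 k) = a 0 k.
Proof. by rewrite /bform mulmx1 trmx_delta -colE mxE. Qed.

Lemma psdmx1 : psdmx 1%:M.
Proof.
split=> [|v]; first exact: trmx1.
by rewrite bform1E; apply: sumr_ge0 => k _; rewrite -expr2 sqr_ge0.
Qed.

End BilinearForm.

Section EuclideanNorm.
Variables (R : realType) (n : nat).
Implicit Types (M : 'M[R]_n) (v w : 'rV[R]_n).

Lemma enorm_ge0 v : 0 <= enorm v.
Proof. exact: sqrtr_ge0. Qed.

Lemma sqr_enorm v : enorm v ^+ 2 = bform 1%:M v v.
Proof.
rewrite sqr_sqrtr ?bform1E; last by apply: sumr_ge0 => k _; rewrite sqr_ge0.
by apply: eq_bigr => k _; rewrite expr2.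
Qed.

Lemma enorm_eq1 v : bform 1%:M v v = 1 -> enorm v = 1.
Proof. by move=> v1; rewrite -[LHS]ger0_norm ?enorm_ge0 // -sqrtr_sqr sqr_enorm v1 sqrtr1. Qed.

Lemma enorm_delta k : enorm (delta_mx 0 k : 'rV[R]_n) = 1.
Proof. by apply: enorm_eq1; rewrite bform_delta mxE eqxx. Qed.

Lemma bform1_le_enorm v w : enorm v = 1 -> bform 1%:M v w <= enorm w.
Proof.
move=> v1; apply: le_trans (ler_norm _) _.
rewrite -ler_sqr ?nnegrE ?enorm_ge0 // real_normK ?num_real // sqr_enorm.
by have := bform_cauchy_schwarz v w (@psdmx1 R n); rewrite -sqr_enorm v1 expr1n mul1r.
Qed.

Lemma bform_mulmx M a b : bform M a b = bform 1%:M a ((M *m b^T)^T).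
Proof. by rewrite /bform mulmx1 trmxK mulmxA. Qed.

Lemma mulmx_trE M v k : ((M *m v^T)^T) 0 k = bform M (delta_mx 0 k) v.
Proof. by rewrite /bform -rowE -row_mul !mxE. Qed.

Lemma scalar_subr_mulmx M c v : ((c *: 1%:M - M) *m v^T)^T = c *: v - (M *m v^T)^T.
Proof. by rewrite mulmxBl scalemx1 mul_scalar_mx linearB linearZ /= trmxK. Qed.

Lemma exists_unit_orthogonal w : (1 < n)%N ->
  exists v, enorm v = 1 /\ bform 1%:M v w = 0.
Proof.
move=> n_gt1; pose i0 := Ordinal (ltnW n_gt1); pose i1 := Ordinal n_gt1.
have sym1 := trmx1 R n.
pose a := w 0 i1; pose b := w 0 i0.
have [ab0|ab_neq0] := eqVneq (a ^+ 2 + b ^+ 2) 0.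
  exists (delta_mx 0 i0); split; first exact: enorm_delta.
  rewrite bformC // bform1_delta -/b; apply/eqP; rewrite -sqrf_eq0 eq_le sqr_ge0 andbT.
  by rewrite -ab0 lerDr sqr_ge0.
pose c := (Num.sqrt (a ^+ 2 + b ^+ 2))^-1.
exists ((c * a) *: delta_mx 0 i0 + (- (c * b)) *: delta_mx 0 i1); split.
  have c2 : c ^+ 2 * (a ^+ 2 + b ^+ 2) = 1.
    by rewrite exprVn sqr_sqrtr ?mulVf ?addr_ge0 ?sqr_ge0.
  apply: enorm_eq1; rewrite bform_scale_add // !bform_delta !mxE /= !mulr1n mulr0n.
  by rewrite !mulr1 mulr0 addr0 -[RHS]c2; ring.
by rewrite bformC // bformDr !bformZr !bform1_delta /a /b; ring.
Qed.

Definition frobenius_norm M := Num.sqrt (\sum_k \sum_l M k l ^+ 2).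

Lemma enorm_mulmx_le_frobenius M v :
  enorm v = 1 -> enorm ((M *m v^T)^T) <= frobenius_norm M.
Proof.
move=> v1; apply: ler_wsqrtr; apply: ler_sum => k _.
rewrite mulmx_trE.
have -> : bform M (delta_mx 0 k) v = bform 1%:M (row k M) v by rewrite /bform rowE mulmx1.
have -> : \sum_l M k l ^+ 2 = bform 1%:M (row k M) (row k M).
  by rewrite bform1E; apply: eq_bigr => l _; rewrite mxE expr2.
have := bform_cauchy_schwarz (row k M) v (@psdmx1 R n).
by rewrite -(sqr_enorm v) v1 expr1n mulr1.
Qed.

Lemma enorm_mulmx_le_spec_norm M v : enorm v = 1 -> enorm ((M *m v^T)^T) <= spec_norm M.
Proof.
move=> v1; apply: ub_le_sup; last by exists v.
by exists (frobenius_norm M) => _ [w w1 <-]; exact: enorm_mulmx_le_frobenius.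
Qed.

Lemma spec_norm_le M B : (0 < n)%N ->
  (forall v, enorm v = 1 -> enorm ((M *m v^T)^T) <= B) -> spec_norm M <= B.
Proof.
move=> n_gt0 MB; apply: ge_sup => [|_ [v v1 <-]]; last exact: MB.
pose e : 'rV[R]_n := delta_mx 0 (Ordinal n_gt0).
by exists (enorm ((M *m e^T)^T)), e => //; exact: enorm_delta.
Qed.

Lemma spec_norm_le_frobenius M : (0 < n)%N -> spec_norm M <= frobenius_norm M.
Proof. by move=> n_gt0; apply: spec_norm_le => // v; exact: enorm_mulmx_le_frobenius. Qed.

Lemma bform_le_spec_norm M v : enorm v = 1 -> bform M v v <= spec_norm M.
Proof.
move=> v1; rewrite bform_mulmx; apply: le_trans (bform1_le_enorm _ v1) _.
exact: enorm_mulmx_le_spec_norm.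
Qed.

Lemma trace_subr_bform_le_enorm M v :
  enorm v = 1 -> \tr M - bform M v v <= enorm (((\tr M *: 1%:M - M) *m v^T)^T).
Proof.
move=> v1; apply: le_trans (bform1_le_enorm _ v1).
by rewrite scalar_subr_mulmx bformDr bformNr bformZr -sqr_enorm v1 expr1n mulr1 -bform_mulmx.
Qed.

Lemma trace_subr_bform_le_spec_norm M v :
  enorm v = 1 -> \tr M - bform M v v <= spec_norm (\tr M *: 1%:M - M).
Proof.
move=> v1; apply: le_trans (trace_subr_bform_le_enorm M v1) _.
exact: enorm_mulmx_le_spec_norm.
Qed.

End EuclideanNorm.

Section PositiveSemidefinite.
Variables (R : realType) (n : nat) (G : 'M[R]_n).
Hypothesis psdG : psdmx G.

Lemma psdmx_diag_ge0 k : 0 <= G k k.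
Proof. by rewrite -bform_delta; exact: psdG.2. Qed.

Lemma psdmx_sqr_le k l : G k l ^+ 2 <= G k k * G l l.
Proof. by rewrite -!bform_delta; exact: bform_cauchy_schwarz. Qed.

Lemma trace_psdmx_ge0 : 0 <= \tr G.
Proof. by apply: sumr_ge0 => k _; exact: psdmx_diag_ge0. Qed.

Lemma sqr_enorm_mulmx_le v : enorm ((G *m v^T)^T) ^+ 2 <= \tr G * bform G v v.
Proof.
rewrite sqr_enorm bform1E /mxtrace mulr_suml; apply: ler_sum => k _.
rewrite -expr2 mulmx_trE -bform_delta; exact: bform_cauchy_schwarz.
Qed.

Lemma enorm_trace_subr_mulmx_le v :
  enorm v = 1 -> enorm (((\tr G *: 1%:M - G) *m v^T)^T) <= \tr G.
Proof.
(* |(t - G) v|^2 = t^2 - 2 t <v, G v> + |G v|^2 and |G v|^2 <= t <v, G v>. *)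
move=> v1; rewrite -ler_sqr ?nnegrE ?enorm_ge0 ?trace_psdmx_ge0 //.
rewrite scalar_subr_mulmx sqr_enorm -scaleN1r bform_scale_add ?trmx1 //.
rewrite -!sqr_enorm v1 -bform_mulmx.
have := sqr_enorm_mulmx_le v; have := psdG.2 v; have := trace_psdmx_ge0; nra.
Qed.

Lemma spec_norm_trace_subr_le : (0 < n)%N -> spec_norm (\tr G *: 1%:M - G) <= \tr G.
Proof. by move=> n_gt0; apply: spec_norm_le => // v; exact: enorm_trace_subr_mulmx_le. Qed.

Lemma spec_norm_lt_trace i j : G i j ^+ 2 < G i i * G j j -> spec_norm G < \tr G.
Proof.
move=> Gij; have n_gt0 : (0 < n)%N := leq_ltn_trans (leq0n i) (ltn_ord i).
apply: le_lt_trans (spec_norm_le_frobenius _ n_gt0) _.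
have trG2 : \tr G ^+ 2 = \sum_k \sum_l G k k * G l l.
  by rewrite expr2 /mxtrace mulr_suml; apply: eq_bigr => k _; rewrite mulr_sumr.
have lt_sum : \sum_k \sum_l G k l ^+ 2 < \tr G ^+ 2.
  rewrite trG2; apply: (ltr_sum_at (i := i)) => [k|].
    by apply: ler_sum => l _; exact: psdmx_sqr_le.
  exact: ltr_sum_at (psdmx_sqr_le i) Gij.
rewrite -[X in _ < X]ger0_norm ?trace_psdmx_ge0 // -sqrtr_sqr ltr_sqrt //.
apply: le_lt_trans lt_sum; apply: sumr_ge0 => k _; apply: sumr_ge0 => l _.
exact: sqr_ge0.
Qed.

End PositiveSemidefinite.

Section SquareIntegrable.
Variables (disp : measure_display) (T : measurableType disp) (R : realType).
Variable P : probability T R.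
Implicit Types (f g : T -> R).

Definition Rintegrable f := P.-integrable setT (EFin \o f).

Definition sqintegrable f := measurable_fun setT f /\ Rintegrable (fun y => f y ^+ 2).

Definition dotL2 f g := \int[P]_y (f y * g y).

Lemma Rintegrable_cst (c : R) : Rintegrable (fun _ => c).
Proof. by have := finite_measure_integrable_cst P c measurableT. Qed.

Lemma RintegrableD f g : Rintegrable f -> Rintegrable g -> Rintegrable (f \+ g).
Proof.
rewrite /Rintegrable (_ : EFin \o (f \+ g) = ((EFin \o f) \+ (EFin \o g))%E) //.
exact: integrableD.
Qed.

Lemma RintegrableZ (c : R) f : Rintegrable f -> Rintegrable (fun y => c * f y).
Proof.
rewrite /Rintegrable (_ : EFin \o (fun y => c * f y) = (fun y => c%:E * (EFin \o f) y)%E) //.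
exact: integrableZl.
Qed.

Lemma Rintegrable_sum (I : Type) (s : seq I) (F : I -> T -> R) :
  (forall i, Rintegrable (F i)) -> Rintegrable (fun y => \sum_(i <- s) F i y).
Proof.
move=> intF; rewrite /Rintegrable.
rewrite (_ : EFin \o _ = (fun y => \sum_(i <- s) (EFin \o F i) y)); last first.
  by apply/funext => y; rewrite /= sumEFin.
by apply: integrable_sum => // i _; exact: intF.
Qed.

Lemma Rintegrable_le f g : measurable_fun setT f -> Rintegrable g ->
  (forall y, `|f y| <= g y) -> Rintegrable f.
Proof.
move=> mf intg fg; apply: le_integrable intg => // [|y _].
  exact/measurable_realfun.measurable_EFinP.
by rewrite /= !lee_fin (le_trans (fg y)) ?ler_norm.
Qed.

Lemma Rintegral_sum (I : Type) (s : seq I) (F : I -> T -> R) :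
  (forall i, Rintegrable (F i)) ->
  \int[P]_y (\sum_(i <- s) F i y) = \sum_(i <- s) \int[P]_y F i y.
Proof.
move=> intF; elim: s => [|i s IHs].
  by under eq_Rintegral do rewrite big_nil; rewrite Rintegral_cst // mul0r big_nil.
under eq_Rintegral do rewrite big_cons.
by rewrite RintegralD ?big_cons ?IHs //; [exact: intF | exact: Rintegrable_sum].
Qed.

Lemma probability_Rintegral_cst (c : R) : \int[P]_y c = c.
Proof.
rewrite Rintegral_cst // [fine _](_ : _ = 1) ?mulr1 //.
by apply: (@eq_trans _ _ (fine (1%E : \bar R))) => //; congr fine; exact: probability_setT.
Qed.

Lemma Rintegral_eq0_ae g : Rintegrable g -> (forall y, 0 <= g y) ->
  \int[P]_y g y = 0 -> P [set y | g y = 0] = 1%E.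
Proof.
move=> intg g_ge0 intg0.
have mg : measurable_fun setT g.
  by case/integrableP: intg => /measurable_realfun.measurable_EFinP.
have abs0 : (\int[P]_(y in setT) `|(EFin \o g) y| = 0)%E.
  rewrite -[RHS]/(0%:E) -intg0 fineK ?integrable_fin_num //.
  by apply: eq_integral => y _; rewrite /= ger0_norm.
have [N [mN PN0 gN]] := (ae_eq_integral_abs P measurableT
  (proj2 (measurable_realfun.measurable_EFinP _ g) mg)).1 abs0.
have mZ : measurable [set y | g y = 0].
  by have := mg measurableT [set 0] (measurable_set1 _); rewrite setTI.
have PZC : P (~` [set y | g y = 0]) = 0%E.
  apply/eqP; rewrite eq_le measure_ge0 andbT -PN0.
  apply: le_measure; rewrite ?inE //; first exact: measurableC.
  by move=> y /= gy; apply: gN => /(_ I) [].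
move: PZC; rewrite probability_setC //.
by case: (P _) => [r [/eqP]|//|//]; rewrite subr_eq0 => /eqP <-.
Qed.

Lemma sqintegrable_cst (c : R) : sqintegrable (fun _ => c).
Proof. by split; [exact: measurable_cst | exact: Rintegrable_cst]. Qed.

Lemma Rintegrable_mul f g : sqintegrable f -> sqintegrable g -> Rintegrable (f \* g).
Proof.
move=> [mf intf] [mg intg]; apply: (Rintegrable_le _ (RintegrableD intf intg)) => [|y /=].
  exact: measurable_realfun.measurable_funM.
rewrite normrM -(real_normK (num_real (f y))) -(real_normK (num_real (g y))).
have := sqr_ge0 (`|f y| - `|g y|); have := normr_ge0 (f y); have := normr_ge0 (g y); nra.
Qed.

Lemma sqintegrable_Rintegrable f : sqintegrable f -> Rintegrable f.
Proof.
move=> sqf; have := Rintegrable_mul sqf (sqintegrable_cst 1).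
by rewrite (_ : f \* _ = f) //; apply/funext => y; exact: mulr1.
Qed.

Lemma sqintegrableD f g : sqintegrable f -> sqintegrable g -> sqintegrable (f \+ g).
Proof.
move=> sqf sqg; split; first exact: measurable_realfun.measurable_funD sqf.1 sqg.1.
have intfg : Rintegrable (fun y => 2 * (f y * g y)) by exact/RintegrableZ/Rintegrable_mul.
rewrite (_ : (fun y => _) = (fun y => f y ^+ 2) \+ (fun y => 2 * (f y * g y)) \+
                           (fun y => g y ^+ 2)); last by apply/funext => y /=; ring.
exact: RintegrableD (RintegrableD sqf.2 intfg) sqg.2.
Qed.

Lemma sqintegrableZ (c : R) f : sqintegrable f -> sqintegrable (fun y => c * f y).
Proof.
move=> [mf intf]; split; first exact: measurable_realfun.measurable_funM.
rewrite (_ : (fun y => _) = (fun y => c ^+ 2 * f y ^+ 2)); first exact: RintegrableZ.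
by apply/funext => y; rewrite exprMn.
Qed.

Lemma sqintegrable_sum (I : Type) (s : seq I) (F : I -> T -> R) :
  (forall i, sqintegrable (F i)) -> sqintegrable (fun y => \sum_(i <- s) F i y).
Proof.
move=> sqF; elim: s => [|i s IHs].
  by under [X in sqintegrable X]funext do rewrite big_nil; exact: sqintegrable_cst.
by under [X in sqintegrable X]funext do rewrite big_cons; exact: sqintegrableD.
Qed.

Lemma dotL2C f g : dotL2 f g = dotL2 g f.
Proof. by apply: eq_Rintegral => y _; rewrite mulrC. Qed.

Lemma dotL2_ge0 f : 0 <= dotL2 f f.
Proof. by apply: Rintegral_ge0 => y _; rewrite -expr2 sqr_ge0. Qed.

Lemma dotL2_cst_addr (c : R) f : sqintegrable f -> \int[P]_y f y = 0 ->
  dotL2 (fun y => c + f y) (fun y => c + f y) = c ^+ 2 + dotL2 f f.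
Proof.
move=> sqf f0; have intf := sqintegrable_Rintegrable sqf.
have intff := Rintegrable_mul sqf sqf.
have -> : dotL2 (fun y => c + f y) (fun y => c + f y) =
    \int[P]_y (c ^+ 2 + (2 * c * f y + f y * f y)).
  by apply: eq_Rintegral => y _; ring.
rewrite RintegralD //; [|exact: Rintegrable_cst | exact/RintegrableD/intff/RintegrableZ].
rewrite RintegralD //; last exact: RintegrableZ.
by rewrite RintegralZl // f0 mulr0 add0r probability_Rintegral_cst.
Qed.

Definition gram n (F : 'I_n -> T -> R) : 'M[R]_n := \matrix_(k, l) dotL2 (F k) (F l).

Definition lincomb n (F : 'I_n -> T -> R) (a : 'rV[R]_n) y := \sum_l a 0 l * F l y.

Lemma lincombE n (F : 'I_n -> T -> R) a y : lincomb F a y = bform 1%:M a (\row_l F l y).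
Proof. by rewrite bform1E; apply: eq_bigr => l _; rewrite mxE. Qed.

Lemma sqintegrable_lincomb n (F : 'I_n -> T -> R) a :
  (forall k, sqintegrable (F k)) -> sqintegrable (lincomb F a).
Proof. by move=> sqF; apply: sqintegrable_sum => l; exact: sqintegrableZ. Qed.

Lemma dotL2_lincomb n (F : 'I_n -> T -> R) a b : (forall k, sqintegrable (F k)) ->
  dotL2 (lincomb F a) (lincomb F b) = bform (gram F) a b.
Proof.
move=> sqF; rewrite bformE.
have -> : dotL2 (lincomb F a) (lincomb F b) =
    \int[P]_y \sum_k \sum_l a 0 k * b 0 l * (F k y * F l y).
  apply: eq_Rintegral => y _; rewrite /lincomb big_distrl; apply: eq_bigr => k _ /=.
  by rewrite big_distrr; apply: eq_bigr => l _; rewrite mulrACA.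
have intkl k l : Rintegrable (fun y => a 0 k * b 0 l * (F k y * F l y)).
  exact/RintegrableZ/Rintegrable_mul.
rewrite Rintegral_sum => [|k]; last exact: Rintegrable_sum.
apply: eq_bigr => k _; rewrite Rintegral_sum //.
apply: eq_bigr => l _; rewrite RintegralZl ?mxE 1?mulrAC //; exact: Rintegrable_mul.
Qed.

Lemma gram_psd n (F : 'I_n -> T -> R) : (forall k, sqintegrable (F k)) -> psdmx (gram F).
Proof.
move=> sqF; split=> [|v]; last by rewrite -dotL2_lincomb // dotL2_ge0.
by apply/matrixP => k l; rewrite !mxE dotL2C.
Qed.

End SquareIntegrable.

Section MomentsOnRd.
Variables (R : realType) (d : nat) (u : probability (Rd R d) R).

Lemma coord_measurable i : measurable_fun setT (fun y : Rd R d => (y : 'rV[R]_d) 0 i).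
Proof.
apply: (measurability _ (measurable_realfun.RGenOpens.measurableE R)) => _ [_ [a [b ->] <-]].
rewrite setTI; apply: sub_gen_smallest.
apply: (open_comp (f := fun M : 'rV[R]_d => M 0 i)) => [M _|].
  exact: coord_continuous.
exact: interval_open.
Qed.

Hypothesis fsm : finite_second_moment u.

Lemma sqintegrable_coord i : sqintegrable u (fun y : Rd R d => (y : 'rV[R]_d) 0 i).
Proof.
split; first exact: coord_measurable.
apply: (Rintegrable_le _ fsm) => [|y].
  by apply: measurable_realfun.measurable_funX; exact: coord_measurable.
rewrite ger0_norm ?sqr_ge0 // sqr_enorm bform1E (bigD1 i) //= -expr2 lerDl.
by apply: sumr_ge0 => k _; rewrite -expr2 sqr_ge0.
Qed.

Definition dev (c : 'rV[R]_d) (i : 'I_d) (y : Rd R d) : R := c 0 i - (y : 'rV[R]_d) 0 i.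

Lemma sqintegrable_dev c i : sqintegrable u (dev c i).
Proof.
rewrite (_ : dev c i = (fun _ => c 0 i) \+ (fun y => -1 * (y : 'rV[R]_d) 0 i)).
  exact/sqintegrableD/sqintegrableZ/sqintegrable_coord/sqintegrable_cst.
by apply/funext => y; rewrite /dev /= mulN1r.
Qed.

Lemma gram_dev_psd c : psdmx (gram u (dev c)).
Proof. exact/gram_psd/sqintegrable_dev. Qed.

Lemma cov_gram : cov u = gram u (dev (mean u)).
Proof.
apply/matrixP => i j; rewrite !mxE; apply: eq_Rintegral => y _.
by rewrite /dev !mxE -mulrNN !opprB.
Qed.

Lemma cov_psd : psdmx (cov u).
Proof. by rewrite cov_gram; exact: gram_dev_psd. Qed.

Lemma Rintegral_dev_mean i : \int[u]_y dev (mean u) i y = 0.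
Proof.
rewrite RintegralB //; first last.
- exact/sqintegrable_Rintegrable/sqintegrable_coord.
- exact: Rintegrable_cst.
by rewrite probability_Rintegral_cst [X in X - _]mxE subrr.
Qed.

Lemma trace_gram_dev c : \tr (gram u (dev c)) = enorm (c - mean u) ^+ 2 + \tr (cov u).
Proof.
rewrite cov_gram sqr_enorm bform1E /mxtrace -big_split; apply: eq_bigr => m _ /=.
rewrite [gram _ (dev c) _ _]mxE [gram _ _ _ _]mxE.
have -> : dev c m = fun y => (c - mean u) 0 m + dev (mean u) m y.
  by apply/funext => y; rewrite /dev [(c - _) _ _]mxE [(- mean u) _ _]mxE addrA subrK.
by rewrite dotL2_cst_addr ?Rintegral_dev_mean //; exact: sqintegrable_dev.
Qed.

Lemma Rintegral_sqr_enorm : \int[u]_y enorm (y : 'rV[R]_d) ^+ 2 = \tr (gram u (dev 0)).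
Proof.
have -> : \int[u]_y enorm (y : 'rV[R]_d) ^+ 2 = \int[u]_y \sum_m dev 0 m y * dev 0 m y.
  apply: eq_Rintegral => y _; rewrite sqr_enorm bform1E; apply: eq_bigr => m _.
  by rewrite /dev mxE sub0r mulrNN.
rewrite Rintegral_sum => [|m]; last exact/Rintegrable_mul/sqintegrable_dev/sqintegrable_dev.
by apply: eq_bigr => m _; rewrite mxE.
Qed.

Lemma mconv_Amat x : mconv (@Amat R d) u x = \tr (gram u (dev x)) *: 1%:M - gram u (dev x).
Proof.
have intdd k l : Rintegrable u (fun y => dev x k y * dev x l y).
  exact/Rintegrable_mul/sqintegrable_dev/sqintegrable_dev.
apply/matrixP => k l; rewrite [LHS]mxE.
have -> : (\tr (gram u (dev x)) *: 1%:M - gram u (dev x)) k l =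
    \tr (gram u (dev x)) * (k == l)%:R - dotL2 u (dev x k) (dev x l) by rewrite !mxE.
have -> : \int[u]_y Amat (x - (y : 'rV[R]_d)) k l =
    \int[u]_y ((k == l)%:R * (\sum_m dev x m y * dev x m y) - dev x k y * dev x l y).
  apply: eq_Rintegral => y _; rewrite /Amat !mxE big_ord1 !mxE sqr_enorm bform1E mulrC.
  by congr (_ * _ - _); apply: eq_bigr => m _; rewrite !mxE.
have intS : Rintegrable u (fun y => \sum_m dev x m y * dev x m y).
  by apply: Rintegrable_sum => m; exact: intdd.
rewrite RintegralB ?RintegralZl ?Rintegral_sum //; [|exact: RintegrableZ intS|exact: intdd].
by rewrite mulrC; congr (_ * _ - _); apply: eq_bigr => m _; rewrite mxE.
Qed.

Lemma bform_gram_dev_orth x v : bform 1%:M v (x - mean u) = 0 ->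
  bform (gram u (dev x)) v v = bform (cov u) v v.
Proof.
move=> vx; rewrite cov_gram -!dotL2_lincomb; try exact: sqintegrable_dev.
suff -> : lincomb (dev x) v = lincomb (dev (mean u)) v by [].
apply/funext => y; rewrite !lincombE.
have -> : \row_l dev x l y = (x - mean u) + \row_l dev (mean u) l y.
  by apply/rowP => l; rewrite /dev !mxE addrA subrK.
by rewrite bformDr vx add0r.
Qed.

Lemma concentrated_on_line_of_residuals i (b : 'rV[R]_d) : b 0 i = 1 ->
  (forall j, bform (cov u) (delta_mx 0 j - b 0 j *: delta_mx 0 i)
                           (delta_mx 0 j - b 0 j *: delta_mx 0 i) = 0) ->
  concentrated_on_line u.
Proof.
move=> bi res0; set V := mean u.
pose r j := lincomb (dev V) (delta_mx 0 j - b 0 j *: delta_mx 0 i).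
have rE j y : r j y = dev V j y - b 0 j * dev V i y.
  by rewrite /r lincombE bformC ?trmx1 // bformDr bformNr bformZr !bform1_delta !mxE.
have sq_r j : sqintegrable u (r j) by apply: sqintegrable_lincomb => k; exact: sqintegrable_dev.
pose g y := \sum_j r j y ^+ 2.
have g_ge0 y : 0 <= g y by apply: sumr_ge0 => j _; exact: sqr_ge0.
have int_g : Rintegrable u g by apply: Rintegrable_sum => j; exact: (sq_r j).2.
have g0 : \int[u]_y g y = 0.
  rewrite Rintegral_sum => [|j]; last exact: (sq_r j).2.
  apply: big1 => j _; rewrite -(res0 j) cov_gram -dotL2_lincomb; last exact: sqintegrable_dev.
  by apply: eq_Rintegral => y _; rewrite expr2.
exists V, b; split.
  by apply/eqP => b0; move: bi; rewrite b0 mxE => /eqP; rewrite eq_sym oner_eq0.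
rewrite -(Rintegral_eq0_ae int_g g_ge0 g0); congr (u _); apply/seteqP; split.
  move=> _ [t _ <-]; apply: big1 => j _; rewrite rE /dev !mxE bi.
  by apply/eqP; rewrite sqrf_eq0; apply/eqP; ring.
move=> y /= gy0; exists (y 0 i - V 0 i) => //; apply/rowP => j.
have : r j y = 0.
  apply/eqP; rewrite -sqrf_eq0; apply/eqP.
  exact: (psumr_eq0P (fun k _ => sqr_ge0 (r k y)) gy0).
rewrite rE /dev => rj0.
rewrite [(V + _) _ _]mxE [(_ *: b) _ _]mxE; apply/eqP.
by rewrite -subr_eq0 -rj0; apply/eqP; ring.
Qed.

Lemma cov_minor_gt0 : (0 < d)%N -> ~ concentrated_on_line u ->
  exists i j, cov u i j ^+ 2 < cov u i i * cov u j j.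
Proof.
(* If all these minors vanish, the centred coordinates are a.e. proportional
   to the i-th one when cov u i i > 0, and all vanish a.e. otherwise. *)
move=> d_gt0 nline; apply: contrapT => nminor; apply: nline.
have [C_sym _] := cov_psd.
have C_symE k l : cov u k l = cov u l k by rewrite -[in LHS]C_sym mxE.
have minor0 k l : cov u k l ^+ 2 = cov u k k * cov u l l.
  apply/eqP; rewrite eq_le (psdmx_sqr_le cov_psd) leNgt /=.
  by apply/negP => lt; apply: nminor; exists k, l.
have [[i Cii]|Cdiag] := pselect (exists i, 0 < cov u i i).
  apply: (@concentrated_on_line_of_residuals i (\row_j (cov u i j / cov u i i))) => [|j].
    by rewrite mxE divff // gt_eqF.
  have -> : (\row_j (cov u i j / cov u i i)) 0 j = cov u i j / cov u i i by rewrite mxE.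
  rewrite bform_delta_subZ // (C_symE j i).
  have -> : cov u j j = cov u i j ^+ 2 / cov u i i.
    by rewrite minor0 mulrAC mulfV ?gt_eqF // mul1r.
  by field; rewrite gt_eqF.
have C0 k : cov u k k = 0.
  apply/eqP; rewrite eq_le (psdmx_diag_ge0 cov_psd) andbT leNgt.
  by apply/negP => Ck; apply: Cdiag; exists k.
pose i0 := Ordinal d_gt0.
apply: (@concentrated_on_line_of_residuals i0 (delta_mx 0 i0)) => [|j].
  by rewrite mxE !eqxx.
have Cj0 : cov u j i0 = 0 by apply/eqP; rewrite -sqrf_eq0 minor0 C0 mul0r.
by rewrite bform_delta_subZ // Cj0 !C0 !mulr0 subrr addr0.
Qed.

End MomentsOnRd.

Lemma concentrated_on_line_dim1 (R : realType) (u : probability (Rd R 1) R) :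
  concentrated_on_line u.
Proof.
exists 0, (\row_ _ 1); split.
  by apply/eqP => /rowP /(_ ord0); rewrite !mxE => /eqP; rewrite oner_eq0.
rewrite (_ : [set _ | t in _] = setT); first exact: probability_setT.
apply/seteqP; split => // y _; exists ((y : 'rV[R]_1) 0 0) => //.
by apply/rowP => j; rewrite !mxE (ord1 j) mulr1 add0r.
Qed.

Theorem lemma2p3 (R : realType) (d : nat) (u : probability (Rd R d) R) :
  (0 < d)%N ->
  finite_second_moment u ->
  ~ concentrated_on_line u ->
  let twoE := \int[u]_x (enorm (x : 'rV[R]_d) ^+ 2) in
  let V := mean u in
  let eps := \tr (cov u) - spec_norm (cov u) in
  0 < eps /\
  forall x : 'rV[R]_d,
    eps <= spec_norm (mconv (@Amat R d) u x) <= twoE + enorm (x - V) ^+ 2.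
Proof.
move=> d_gt0 fsm nline twoE V eps; rewrite {}/twoE {}/V {}/eps.
have d_gt1 : (1 < d)%N.
  rewrite ltn_neqAle d_gt0 andbT; apply/eqP => d1; subst d.
  exact/nline/concentrated_on_line_dim1.
have [i [j Cij]] := cov_minor_gt0 fsm d_gt0 nline.
split=> [|x]; first by rewrite subr_gt0; have := spec_norm_lt_trace (cov_psd fsm) Cij.
rewrite mconv_Amat //; have G_psd := gram_dev_psd fsm x.
have [v [v1 vx]] := exists_unit_orthogonal (x - mean u) d_gt1.
have := trace_subr_bform_le_spec_norm (gram u (dev x)) v1.
have := spec_norm_trace_subr_le G_psd d_gt0.
rewrite Rintegral_sqr_enorm // !trace_gram_dev // bform_gram_dev_orth //.
have := bform_le_spec_norm (cov u) v1.
have := sqr_ge0 (enorm (x - mean u)); have := sqr_ge0 (enorm (0 - mean u)).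
lra.
Qed.
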